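(* Let $q$ be a prime power and $m,n$ positive integers. Let $\alpha,\beta\in\mathbb{F}_{q^2}^*$ be distinct with $\alpha^{q+1}=\beta^{q+1}=1$, and let $\varepsilon\in\mathbb{F}_{q^2}^*$. Then $$f(x)=(x+\alpha x^q)^m+\varepsilon(x+\beta x^q)^n$$ is a permutation polynomial of $\mathbb{F}_{q^2}$ if and only if $\gcd(mn,q-1)=1$ and $\varepsilon^{q-1}\alpha^m\neq\beta^n$.
   Context: A polynomial is a permutation polynomial of $\mathbb{F}_{q^2}$ if the map it induces on $\mathbb{F}_{q^2}$ is bijective. *)

From HB Require Import structures.
From mathcomp Require Import all_boot all_order all_algebra all_field.
Set Implicit Arguments. Unset Strict Implicit. Unset Printing Implicit Defensive.
Import GRing.Theory.
Local Open Scope ring_scope.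

Definition prime_power (q : nat) : Prop :=
  exists p k : nat, prime p /\ (0 < k)%N /\ q = (p ^ k)%N.

Definition is_perm_poly (F : finFieldType) (f : {poly F}) : Prop :=
  bijective (fun x : F => f.[x]).

(** Write [T_a x := x + a x^q].  When [a^(q+1) = 1], [T_a] maps [F_(q^2)] into
    the [F_q]-line [L_a := {u | a u^q = u}], and [L_a] is stable under
    differences, under [u |-> u^k] (landing in [L_(a^k)]) and under scaling.
    Distinct lines meet only in [0], and [T_a], [T_b] have no common nonzero
    root.

    If [f x = f y], then [u^m - u'^m = eps (v'^n - v^n)] with [u = T_alpha x],
    [v = T_beta x], etc., lies both in [L_(alpha^m)] and in
    [L_(beta^n / eps^(q-1))], hence vanishes when [eps^(q-1) alpha^m <> beta^n].
    Coprimality with [q - 1] makes [k]-th powers injective on a line, which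
    gives [T_alpha x = T_alpha y], [T_beta x = T_beta y], hence [x = y].

    Conversely, if [d = gcd(m, q-1) > 1], pick [w in F_q] of order [d] and
    [x0 <> 0] in the kernel of [T_beta]: then [f (w x0) = f x0].  And if
    [eps^(q-1) alpha^m = beta^n], the whole image of [f] lies in the proper
    subset [L_(alpha^m)]. *)
From HB Require Import structures.
From mathcomp Require Import all_boot all_order all_algebra all_field.
From mathcomp Require Import zify ring cyclic.
Import GRing.Theory.
Set Implicit Arguments. Unset Strict Implicit.
Local Open Scope ring_scope.

Lemma prime_power_gt1 (q : nat) : prime_power q -> (1 < q)%N.
Proof.
case=> p [k [p_pr [k_gt0 ->]]].
by rewrite -{1}(expn0 p) ltn_exp2l ?prime_gt1.
Qed.

Section TwistedTrace.
Variables (F : finFieldType) (q : nat).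
Hypotheses (hq : prime_power q) (hF : #|F| = (q ^ 2)%N).

Let q_gt1 : (1 < q)%N := prime_power_gt1 hq.
Let q_gt0 : (0 < q)%N := ltnW q_gt1.

Lemma pchar_nat_q : [pchar F].-nat q.
Proof.
have [p [k [p_pr [_ qE]]]] := hq.
have pF : p \in [pchar F].
  by apply: (card_finPcharP (n := (k * 2)%N)) => //; rewrite hF qE expnM.
by rewrite (eq_pnat _ (pcharf_eq pF)) qE pnatX pnat_id.
Qed.

Lemma expqD (x y : F) : (x + y) ^+ q = x ^+ q + y ^+ q.
Proof. exact: exprDn_pchar pchar_nat_q. Qed.

Lemma expqB (x y : F) : (x - y) ^+ q = x ^+ q - y ^+ q.
Proof. by rewrite expqD (exprNn_pchar _ pchar_nat_q). Qed.

Lemma expqK (x : F) : (x ^+ q) ^+ q = x.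
Proof. by rewrite -exprM -[(q * q)%N]/(q ^ 2)%N -hF expf_card. Qed.

Lemma expq_sub1 (w : F) : w ^+ q = w ^+ (q - 1) * w.
Proof. by rewrite -exprSr subn1 prednK. Qed.

Lemma exists_not_fixed : exists y : F, y ^+ q != y.
Proof.
apply/existsP; apply: contraT; rewrite negb_exists => /forallP /= fixed.
pose p : {poly F} := 'X^q - 'X.
have sz : size p = q.+1.
  by rewrite size_polyDl ?size_polyXn // size_polyN size_polyX; case: q q_gt1 => [|[]].
have all_roots : all (root p) (enum F).
  by apply/allP => y _; rewrite rootE !hornerE (eqP (negPn (fixed y))) subrr.
have too_many : (size p <= size (enum F))%N by rewrite -cardE hF sz expnS expn1; nia.
by move/eqP: (roots_geq_poly_eq0 all_roots (enum_uniq F) too_many); rewrite -size_poly_eq0 sz.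
Qed.

Lemma fixed_expr_pred (w : F) : w ^+ q = w -> w != 0 -> w ^+ (q - 1) = 1.
Proof. by move=> wq w0; apply: (mulIf w0); rewrite mul1r -expq_sub1. Qed.

Lemma fixed_expr_coprime_eq1 (k : nat) (w : F) : (0 < k)%N -> coprime k (q - 1) ->
  w ^+ q = w -> w ^+ k = 1 -> w = 1.
Proof.
move=> k_gt0 cop wq wk.
have [w0|w0] := eqVneq w 0.
  by move: wk; rewrite w0 expr0n gtn_eqF // => /esym/eqP; rewrite oner_eq0.
have [a _ /dvdnP[j Ej]] := Bezoutl (q - 1) k_gt0.
rewrite (eqP cop) in Ej.
have : w ^+ (1 + a * (q - 1)) = w ^+ (j * k) by rewrite Ej.
by rewrite exprD mulnC exprM fixed_expr_pred // expr1n mulr1 mulnC exprM wk expr1n.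
Qed.

Lemma exists_fixed_root_of_unity (d : nat) : (1 < d)%N -> (d %| q - 1)%N ->
  exists w : F, [/\ w ^+ q = w, w ^+ d = 1 & w != 1].
Proof.
move=> d_gt1 d_dvd.
pose N := #|F|.-1.
have N_gt0 : (0 < N)%N by rewrite /N hF; nia.
have NE : N = ((q - 1) * q.+1)%N by rewrite /N hF; nia.
have /hasP[z _ zN] : has N.-primitive_root (enum (predC1 (0 : F))).
  apply: has_prim_root => //; last by rewrite -cardE cardC1.
  - apply/allP => x; rewrite mem_enum /= => x0; rewrite unity_rootE; apply/eqP.
    by apply: (mulIf x0); rewrite mul1r -exprSr /N prednK ?expf_card // hF; nia.
  - exact: enum_uniq.
have d_dvdN : (d %| N)%N by rewrite NE dvdn_mulr.
exists (z ^+ (N %/ d)); split.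
- have wq1 : (z ^+ (N %/ d)) ^+ (q - 1) = 1.
    case/dvdnP: d_dvd => j ->; rewrite -exprM (mulnC j) mulnA divnK // exprM.
    by rewrite (prim_expr_order zN) expr1n.
  by rewrite -{1}(subnK q_gt0) addn1 exprSr wq1 mul1r.
- by rewrite -exprM divnK // (prim_expr_order zN).
- rewrite -(expr0 z) (eq_prim_root_expr zN) mod0n modn_small ?ltn_Pdiv //.
  by rewrite -lt0n divn_gt0 ?(ltnW d_gt1) // dvdn_leq.
Qed.

(** For [a^(q+1) = 1], [on_line a] is the one-dimensional [F_q]-subspace
    [L_a] of [F]; [L_1] is [F_q] itself. *)
Definition on_line (a u : F) : Prop := a * u ^+ q = u.

Definition twisted_trace (a x : F) : F := x + a * x ^+ q.

Lemma on_line_not_full (c : F) : ~ (forall y, on_line c y).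
Proof.
move=> full; have c1 : c = 1 by have := full 1; rewrite /on_line expr1n mulr1.
by have [y /eqP[]] := exists_not_fixed; rewrite -{2}(full y) c1 mul1r.
Qed.

Lemma on_line_eq0 (a b y : F) : a != b -> on_line a y -> on_line b y -> y = 0.
Proof.
move=> ab ya yb; have : (a - b) * y ^+ q = 0 by rewrite mulrBl ya yb subrr.
by move/eqP; rewrite mulf_eq0 subr_eq0 (negbTE ab) expf_eq0 => /andP[_ /eqP].
Qed.

Lemma on_lineD (a u v : F) : on_line a u -> on_line a v -> on_line a (u + v).
Proof. by rewrite /on_line expqD mulrDr => -> ->. Qed.

Lemma on_lineB (a u v : F) : on_line a u -> on_line a v -> on_line a (u - v).
Proof. by rewrite /on_line expqB mulrBr => -> ->. Qed.

Lemma on_lineX (a u : F) (k : nat) : on_line a u -> on_line (a ^+ k) (u ^+ k).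
Proof. by rewrite /on_line -exprM mulnC exprM -exprMn => ->. Qed.

Lemma on_lineZ (c e w : F) : e != 0 -> on_line c w ->
  on_line (c / e ^+ (q - 1)) (e * w).
Proof.
move=> e0 cw; have eq1_0 : e ^+ (q - 1) != 0 by rewrite expf_neq0.
by rewrite /on_line exprMn expq_sub1 -{2}cw; field.
Qed.

Lemma on_line_expr_inj (a u u' : F) (k : nat) : (0 < k)%N -> coprime k (q - 1) ->
  a != 0 -> on_line a u -> on_line a u' -> u ^+ k = u' ^+ k -> u = u'.
Proof.
move=> k_gt0 cop a0 ua u'a uk.
have [u'0|u'0] := eqVneq u' 0.
  by move: uk; rewrite u'0 expr0n gtn_eqF // => /eqP; rewrite expf_eq0 k_gt0 => /eqP.
apply: divr1_eq; apply: (fixed_expr_coprime_eq1 k_gt0 cop).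
  have uq : u ^+ q = a^-1 * u by rewrite -{2}ua mulKf.
  have u'q : u' ^+ q = a^-1 * u' by rewrite -{2}u'a mulKf.
  by rewrite exprMn exprVn uq u'q; field; rewrite u'0 a0.
by rewrite exprMn exprVn uk divff // expf_neq0.
Qed.

Lemma twisted_trace_on_line (a x : F) : a ^+ q.+1 = 1 ->
  on_line a (twisted_trace a x).
Proof.
by move=> a1; rewrite /on_line expqD exprMn expqK mulrDr mulrA -exprS a1 mul1r addrC.
Qed.

Lemma twisted_traceB (a x y : F) :
  twisted_trace a (x - y) = twisted_trace a x - twisted_trace a y.
Proof. by rewrite /twisted_trace expqB; ring. Qed.

Lemma twisted_traceZ (a w x : F) : w ^+ q = w ->
  twisted_trace a (w * x) = w * twisted_trace a x.
Proof. by rewrite /twisted_trace exprMn => ->; ring. Qed.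

Lemma twisted_trace_common_root (a b d : F) : a != b ->
  twisted_trace a d = 0 -> twisted_trace b d = 0 -> d = 0.
Proof.
move=> ab da db; have : (a - b) * d ^+ q = twisted_trace a d - twisted_trace b d.
  by rewrite /twisted_trace; ring.
rewrite da db subrr.
by move/eqP; rewrite mulf_eq0 subr_eq0 (negbTE ab) expf_eq0 => /andP[_ /eqP].
Qed.

(** [T_b] cannot be injective, since it maps [F] into the proper subset [L_b]. *)
Lemma twisted_trace_kernel (b : F) : b ^+ q.+1 = 1 ->
  exists2 x : F, x != 0 & twisted_trace b x = 0.
Proof.
move=> b1; have [x /andP[x0 /eqP Tx] | ker0] :=
  pickP (fun x => (x != 0) && (twisted_trace b x == 0)); first by exists x.
have inj : injective (twisted_trace b).
  move=> x y Txy; apply/eqP; rewrite -subr_eq0.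
  by move/negbT: (ker0 (x - y)); rewrite twisted_traceB Txy subrr eqxx andbT negbK.
have [g _ gK] := injF_bij inj.
by case: (@on_line_not_full b) => y; rewrite -(gK y); apply: twisted_trace_on_line.
Qed.

Definition twisted_map (a b e : F) (m n : nat) (x : F) : F :=
  twisted_trace a x ^+ m + e * twisted_trace b x ^+ n.

Lemma twisted_map_swap (a b e : F) (m n : nat) (x : F) : e != 0 ->
  twisted_map a b e m n x = e * twisted_map b a e^-1 n m x.
Proof. by move=> e0; rewrite /twisted_map mulrDr mulrA mulfV // mul1r addrC. Qed.

Lemma coprime_of_twisted_map_inj (a b e : F) (m n : nat) :
  a ^+ q.+1 = 1 -> b ^+ q.+1 = 1 -> a != b -> (0 < n)%N ->
  injective (twisted_map a b e m n) -> coprime m (q - 1).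
Proof.
move=> a1 b1 ab n_gt0 inj.
have [x0 x0_neq0 Tbx0] := twisted_trace_kernel b1.
apply: contraT => not_cop; pose d := gcdn m (q - 1).
have d_gt1 : (1 < d)%N.
  have : (0 < d)%N by rewrite gcdn_gt0 subn_gt0 q_gt1 orbT.
  by move: not_cop; rewrite /coprime -/d; case: d => [|[]].
have [w [wq wd w_neq1]] := exists_fixed_root_of_unity d_gt1 (dvdn_gcdr _ _).
have wm : w ^+ m = 1.
  by case/dvdnP: (dvdn_gcdl m (q - 1)) => j ->; rewrite mulnC exprM wd expr1n.
have : twisted_map a b e m n (w * x0) = twisted_map a b e m n x0.
  by rewrite /twisted_map !twisted_traceZ // Tbx0 mulr0 exprMn wm mul1r.
move/inj => wx0; have w1 : w = 1 by apply: (mulIf x0_neq0); rewrite mul1r.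
by rewrite w1 eqxx in w_neq1.
Qed.

Lemma coprime_exponents_of_twisted_map_inj (a b e : F) (m n : nat) :
  a ^+ q.+1 = 1 -> b ^+ q.+1 = 1 -> a != b -> e != 0 -> (0 < m)%N -> (0 < n)%N ->
  injective (twisted_map a b e m n) -> coprime (m * n) (q - 1).
Proof.
move=> a1 b1 ab e0 m_gt0 n_gt0 inj.
rewrite coprimeMl (coprime_of_twisted_map_inj a1 b1 ab n_gt0 inj).
apply: (coprime_of_twisted_map_inj (e := e^-1) b1 a1 _ m_gt0); first by rewrite eq_sym.
move=> x y Exy; apply: inj.
by rewrite (twisted_map_swap _ _ _ _ x e0) (twisted_map_swap _ _ _ _ y e0) Exy.
Qed.

Lemma twisted_map_on_line (a b e : F) (m n : nat) (x : F) :
  a ^+ q.+1 = 1 -> b ^+ q.+1 = 1 -> e != 0 -> e ^+ (q - 1) * a ^+ m = b ^+ n ->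
  on_line (a ^+ m) (twisted_map a b e m n x).
Proof.
move=> a1 b1 e0 abe; have eq1_0 : e ^+ (q - 1) != 0 by rewrite expf_neq0.
apply: on_lineD; first exact/on_lineX/twisted_trace_on_line.
have -> : a ^+ m = b ^+ n / e ^+ (q - 1) by rewrite -abe; field.
by apply: on_lineZ => //; apply/on_lineX/twisted_trace_on_line.
Qed.

Lemma twisted_map_inj (a b e : F) (m n : nat) : (0 < m)%N -> (0 < n)%N ->
  a != 0 -> b != 0 -> a != b -> a ^+ q.+1 = 1 -> b ^+ q.+1 = 1 -> e != 0 ->
  coprime (m * n) (q - 1) -> e ^+ (q - 1) * a ^+ m != b ^+ n ->
  injective (twisted_map a b e m n).
Proof.
move=> m_gt0 n_gt0 a0 b0 ab a1 b1 e0; rewrite coprimeMl => /andP[cop_m cop_n] abe.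
move=> x y; rewrite /twisted_map.
set u := twisted_trace a x; set u' := twisted_trace a y.
set v := twisted_trace b x; set v' := twisted_trace b y => fxy.
have [ua u'a] : on_line a u /\ on_line a u' by split; apply: twisted_trace_on_line.
have [vb v'b] : on_line b v /\ on_line b v' by split; apply: twisted_trace_on_line.
have eq1_0 : e ^+ (q - 1) != 0 by rewrite expf_neq0.
have diffE : u ^+ m - u' ^+ m = e * v' ^+ n - e * v ^+ n.
  by rewrite -[u ^+ m](addrK (e * v ^+ n)) fxy; ring.
have diff0 : u ^+ m - u' ^+ m = 0.
  apply: (@on_line_eq0 (a ^+ m) (b ^+ n / e ^+ (q - 1))).
  - by apply: contra abe => /eqP ->; rewrite mulrC divfK.
  - by apply: on_lineB; apply: on_lineX.
  - by rewrite diffE; apply: on_lineB; apply: on_lineZ => //; apply: on_lineX.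
have um : u ^+ m = u' ^+ m by apply/subr0_eq.
have vn : v ^+ n = v' ^+ n.
  by apply/(mulfI e0)/esym/subr0_eq; rewrite -diffE.
apply/eqP; rewrite -subr_eq0; apply/eqP; apply: (twisted_trace_common_root ab).
  by rewrite twisted_traceB -/u -/u' (on_line_expr_inj m_gt0 cop_m a0 ua u'a um) subrr.
by rewrite twisted_traceB -/v -/v' (on_line_expr_inj n_gt0 cop_n b0 vb v'b vn) subrr.
Qed.

End TwistedTrace.

Lemma is_perm_poly_twisted_map (q m n : nat) (F : finFieldType) (alpha beta eps : F) :
  is_perm_poly (('X + alpha *: 'X^q) ^+ m + eps *: ('X + beta *: 'X^q) ^+ n)
  <-> bijective (twisted_map q alpha beta eps m n).
Proof.
have evalE : (fun x : F => (('X + alpha *: 'X^q) ^+ m + eps *: ('X + beta *: 'X^q) ^+ n).[x])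
    =1 twisted_map q alpha beta eps m n.
  by move=> x; rewrite /twisted_map /twisted_trace !hornerE.
by split=> bij; [exact: (eq_bij bij evalE) | exact: (eq_bij bij (fsym evalE))].
Qed.

Theorem proposition3p1 (q m n : nat) (F : finFieldType)
  (hq : prime_power q) (hF : #|F| = (q ^ 2)%N)
  (hm : (0 < m)%N) (hn : (0 < n)%N)
  (alpha beta eps : F)
  (ha0 : alpha != 0) (hb0 : beta != 0) (hab : alpha != beta)
  (ha1 : alpha ^+ q.+1 = 1) (hb1 : beta ^+ q.+1 = 1)
  (he0 : eps != 0) :
  is_perm_poly (('X + alpha *: 'X^q) ^+ m + eps *: ('X + beta *: 'X^q) ^+ n)
  <-> (gcdn (m * n) (q - 1) = 1)%N /\ eps ^+ (q - 1) * alpha ^+ m != beta ^+ n.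
Proof.
split=> [/is_perm_poly_twisted_map [g fK gK] | [/eqP cop abe]].
- split; first apply/eqP.
    exact: (coprime_exponents_of_twisted_map_inj hq hF ha1 hb1 hab he0 hm hn (can_inj fK)).
  apply/eqP => abe; apply: (on_line_not_full hq hF (c := alpha ^+ m)) => y.
  by rewrite -(gK y); apply: twisted_map_on_line.
- apply/is_perm_poly_twisted_map/injF_bij.
  exact: (twisted_map_inj hq hF hm hn ha0 hb0 hab ha1 hb1 he0 cop abe).
Qed.
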